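(* Consider the wireless network model described in the context. For any scheduling policy $\pi \in \Pi$ and every link $e \in E$, \[ \lim_{t \to \infty} \mathbb{E}\left[\frac{1}{t}\sum_{\tau=0}^{t-1} U_e(\tau) S_e(\tau) A_e(\tau)\right] = 1 . \]
   Context: A wireless network is a directed graph $G=(V,E)$ with finite link set $E$. Time is slotted, $t = 0,1,2,\dots$. A collection $\mathcal{A}$ of subsets of $E$ (feasible activation sets) is given. In each slot $t$ a scheduling policy chooses a set $m_t \in \mathcal{A}$; $U_e(t) = \mathbb{I}\{e \in m_t\} \in \{0,1\}$. The channel state $S_e(t) \in \{0,1\}$ of link $e$ is i.i.d. across time with $\gamma_e = \Pr[S_e(t) = 1] > 0$; a transmission on $e$ at time $t$ succeeds iff $U_e(t)S_e(t)=1$. The age of link $e$ evolves as $A_e(t+1) = 1 + A_e(t) - U_e(t)S_e(t)A_e(t)$ (so it resets to $1$ after a successful transmission and otherwise increases by $1$). The scheduler does not know the current channel state: $m_t$ is chosen (possibly randomly) as a function of the history $\mathcal{H}(t) = \{\mathbf{U}(\tau), \mathbf{A}(\tau') : 0 \le \tau < t,\ 0 \le \tau' \le t\}$, so $S_e(t)$ is independent of $U_e(t)$ and $A_e(t)$. The link activation frequency of a policy $\pi$ is $f_e(\pi) = \lim_{t\to\infty}\frac{1}{t}\sum_{\tau=0}^{t-1}\mathbb{I}\{e \in m_\tau, m_\tau \in \mathcal{A}\}$, and $\Pi$ denotes the class of such policies for which $f_e(\pi)$ exists and is positive for every $e \in E$. *)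

From HB Require Import structures.
From mathcomp Require Import all_boot all_order all_algebra.
From mathcomp Require Import all_classical all_reals all_analysis.

Set Implicit Arguments.
Unset Strict Implicit.
Unset Printing Implicit Defensive.

Import Order.TTheory GRing.Theory Num.Theory.
Local Open Scope ring_scope.

(* A_e(0) = a0 e;
   A_e(t+1) = 1 + A_e(t) - U_e(t) S_e(t) A_e(t)
            = 1 if e is activated and the channel is ON, A_e(t) + 1 otherwise. *)
Fixpoint age (Omega : Type) (E : finType) (a0 : E -> nat)
    (m : nat -> Omega -> {set E}) (S : E -> nat -> Omega -> bool)
    (e : E) (t : nat) (w : Omega) : nat :=
  match t with
  | 0 => a0 e
  | t'.+1 => if (e \in m t' w) && S e t' w then 1
             else (age a0 m S e t' w).+1
  end.

(* The history H(t) together with the decision m_t: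
   (m_tau, (A_e(tau))_e) for tau = 0..t.  It determines
   U(tau) for tau <= t and A(tau') for tau' <= t. *)
Definition hist (Omega : Type) (E : finType) (a0 : E -> nat)
    (m : nat -> Omega -> {set E}) (S : E -> nat -> Omega -> bool)
    (t : nat) (w : Omega) : seq ({set E} * {ffun E -> nat}) :=
  [seq (m tau w, [ffun e => age a0 m S e tau w]) | tau <- iota 0 t.+1].

Definition avg_reset_age (R : realType) (Omega : Type) (E : finType)
    (a0 : E -> nat) (m : nat -> Omega -> {set E})
    (S : E -> nat -> Omega -> bool) (e : E) (t : nat) (w : Omega) : R :=
  (t%:R)^-1 * \sum_(tau < t)
     (((e \in m tau w) && S e tau w)%:R * (age a0 m S e tau w)%:R).

Definition act_freq (R : realType) (Omega : Type) (E : finType)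
    (m : nat -> Omega -> {set E}) (e : E) (t : nat) (w : Omega) : R :=
  (t%:R)^-1 * \sum_(tau < t) (e \in m tau w)%:R.

From HB Require Import structures.
From mathcomp Require Import all_boot all_order all_algebra.
From mathcomp Require Import all_classical all_reals all_analysis.
From mathcomp Require Import zify ring lra.
From mathcomp Require Import measurable_realfun.
Import Order.TTheory GRing.Theory Num.Theory.
Import numFieldTopology.Exports numFieldNormedType.Exports.
Local Open Scope classical_set_scope.
Local Open Scope ring_scope.
Set Implicit Arguments.
Unset Strict Implicit.
Unset Printing Implicit Defensive.

(* The age resets to 1 exactly at the successful transmissions, so summing the
   recursion gives  sum_(tau < t) U_e S_e A_e(tau) + A_e(t) = t + A_e(0):  the
   average equals 1 + (A_e(0) - A_e(t)) / t <= 1 + A_e(0) / t.  For the lower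
   bound it suffices that A_e(t) <= t / M with probability close to 1.  If
   A_e(t) > t / M, no transmission succeeded during the last t / M slots.  As
   the activation frequency converges almost surely to f_e > 0, with high
   probability these slots contain more than K activations; and as S_e(tau) is
   independent of the history that determines the decision m_tau, K failed
   activations in a row have probability at most (1 - gamma_e)^K. *)

Section countable_valued.
Context d (T : measurableType d).

Definition fibre_measurable (C : countType) (g : T -> C) :=
  forall x, measurable [set w | g w = x].

Definition saturated (C : Type) (g : T -> C) (A : set T) :=
  forall w w', g w = g w' -> A w -> A w'.

(* Indexing by [pickle] turns unions over the fibres of [g] into unions over [nat]. *)
Definition fibre_piece (C : countType) (g : T -> C) (A : set T) n :=
  [set w | A w /\ pickle (g w) = n].

Variables (C : countType) (g : T -> C).

Lemma bigcup_fibre_piece A : A = \bigcup_n fibre_piece g A n.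
Proof.
by apply/seteqP; split=> [w Aw|w [n _ []]] //; exists (pickle (g w)).
Qed.

Lemma fibre_piece_trivIset A : trivIset setT (fibre_piece g A).
Proof. by move=> i j _ _ [w [[_ <-] [_ <-]]]. Qed.

Lemma saturated_fibre_piece A n : saturated g A ->
  fibre_piece g A n = set0 \/ exists x, fibre_piece g A n = [set w | g w = x].
Proof.
move=> satA; have [[w0 [Aw0 gw0]]|] := pselect (exists w0, fibre_piece g A n w0).
- right; exists (g w0); apply/seteqP; split=> w /=.
  + by move=> [_]; rewrite -gw0 => /(pcan_inj pickleK).
  + by move=> gw; split; [exact: satA Aw0 | rewrite gw].
- by move=> nA; left; apply/seteqP; split=> // w Aw; apply: nA; exists w.
Qed.

Hypothesis g_meas : fibre_measurable g.

Lemma saturated_measurable A : saturated g A -> measurable A.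
Proof.
move=> satA; rewrite (bigcup_fibre_piece A); apply: bigcupT_measurable => n.
by have [->|[x ->]] := saturated_fibre_piece n satA.
Qed.

Lemma fibre_measurable_preimage (B : set C) : measurable (g @^-1` B).
Proof. by apply: saturated_measurable => w w' /= ->. Qed.

Lemma saturated_measurable_fun d' (U : sigmaRingType d') (h : T -> U) :
  (forall w w', g w = g w' -> h w = h w') -> measurable_fun setT h.
Proof.
move=> gh _ Y _; rewrite setTI; apply: saturated_measurable => w w' gw /=.
by rewrite (gh _ _ gw).
Qed.

Lemma measure_saturated_setI (R : realType) (mu : {measure set T -> \bar R})
    (B : set T) (c : R) :
  measurable B ->
  (forall x, mu ([set w | g w = x] `&` B) = (c%:E * mu [set w | g w = x])%E) ->
  forall A, saturated g A -> mu (A `&` B) = (c%:E * mu A)%E.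
Proof.
move=> mB gB A satA.
have mpiece n : measurable (fibre_piece g A n).
  by have [->|[x ->]] := saturated_fibre_piece n satA.
have pieceB n : mu (fibre_piece g A n `&` B) = (c%:E * mu (fibre_piece g A n))%E.
  by have [->|[x ->]] := saturated_fibre_piece n satA; rewrite ?set0I ?measure0 ?mule0.
rewrite (bigcup_fibre_piece A) setI_bigcupl.
rewrite measure_bigcup //=; last first.
- exact/trivIset_setIr/fibre_piece_trivIset.
- by move=> n _; exact: measurableI.
rewrite measure_bigcup //=; last exact: fibre_piece_trivIset.
by rewrite (eq_eseriesr (fun n _ => pieceB n)) nneseriesZl.
Qed.

End countable_valued.

Section fibre_measurable_closure.
Context d (T : measurableType d).

Lemma fibre_measurable_cst (C : countType) (c : C) :
  fibre_measurable (fun _ : T => c).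
Proof.
move=> x; have [->|cx] := eqVneq c x.
  by rewrite (_ : [set _ | _] = setT) //; apply/seteqP.
rewrite (_ : [set _ | _] = set0) //.
by apply/seteqP; split=> w //= /eqP; rewrite (negbTE cx).
Qed.

Lemma fibre_measurable_comp (C C' : countType) (g : T -> C) (F : C -> C') :
  fibre_measurable g -> fibre_measurable (F \o g).
Proof. by move=> g_meas x; apply: (saturated_measurable g_meas) => w w' /= ->. Qed.

Lemma fibre_measurable_pair (C1 C2 : countType) (g1 : T -> C1) (g2 : T -> C2) :
  fibre_measurable g1 -> fibre_measurable g2 ->
  fibre_measurable (fun w => (g1 w, g2 w)).
Proof.
move=> g1_meas g2_meas [x1 x2].
rewrite (_ : [set _ | _] = [set w | g1 w = x1] `&` [set w | g2 w = x2]).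
  exact: measurableI.
by apply/seteqP; split=> w /=; [case=> -> -> | case=> -> ->].
Qed.

Lemma fibre_measurable_map (I : Type) (C : countType) (g : I -> T -> C) s :
  (forall i, fibre_measurable (g i)) ->
  fibre_measurable (fun w => [seq g i w | i <- s]).
Proof.
move=> g_meas; elim: s => [|i s IHs] /=; first exact: fibre_measurable_cst.
exact: (fibre_measurable_comp (fun p : C * seq C => p.1 :: p.2)
          (fibre_measurable_pair (g_meas i) IHs)).
Qed.

Lemma fibre_measurable_ffun (I : finType) (C : countType) (g : I -> T -> C) :
  (forall i, fibre_measurable (g i)) ->
  fibre_measurable (fun w => [ffun i => g i w]).
Proof.
move=> g_meas h.
rewrite (_ : [set _ | _] = [set w | [seq g i w | i <- enum I] = [seq h i | i <- enum I]]).
  exact: fibre_measurable_map.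
apply/seteqP; split=> w /=.
  by move=> <-; apply: eq_map => i; rewrite ffunE.
move/eq_in_map => gh; apply/ffunP => i; rewrite ffunE; apply: gh.
by rewrite mem_enum.
Qed.

Lemma fibre_measurable_bool (b : T -> bool) :
  measurable [set w | b w] -> fibre_measurable b.
Proof.
move=> mb [].
  by rewrite (_ : [set _ | _] = [set w | b w]) //; apply/seteqP.
rewrite (_ : [set _ | _] = ~` [set w | b w]); first exact: measurableC.
by apply/seteqP; split=> w /=; [move=> -> | case: (b w)].
Qed.

End fibre_measurable_closure.

Lemma ae_cvg_deviation_small d (T : measurableType d) (R : realType)
    (P : probability T R) (X : nat -> T -> R) (l dl eps : R) :
  0 < dl -> 0 < eps ->
  (forall s, measurable [set w | dl < `|X s w - l|]) ->
  {ae P, forall w, (fun s => X s w : R^o) @ \oo --> l} ->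
  exists N, (P (\bigcup_(s in [set s | (N <= s)%N])
                 [set w | (dl < `|X s w - l|)%R]) <= eps%:E)%E.
Proof.
move=> dl0 eps0 mX [N0 [mN0 PN0 sN0]].
pose Dev N := \bigcup_(s in [set s | (N <= s)%N]) [set w | dl < `|X s w - l|].
have mDev N : measurable (Dev N) by apply: bigcup_measurable => s _; exact: mX.
have PDevE N : P (Dev N) = (fine (P (Dev N)))%:E.
  by rewrite fineK //; exact: fin_num_measure.
have Dev_N0 : \bigcap_N Dev N `<=` N0.
  move=> w Dw; apply: sN0 => /cvgrPdist_lt /(_ dl dl0) [N _ closeN].
  have [s /= le_N_s] := Dw N I.
  by rewrite distrC ltNge ltW //; exact: closeN.
have P0 : P (\bigcap_N Dev N) = 0%E.
  apply/eqP; rewrite eq_le measure_ge0 andbT -PN0.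
  by apply: le_measure Dev_N0; rewrite inE //; exact: bigcapT_measurable.
have : (P \o Dev) N @[N --> \oo] --> 0%E.
  rewrite -P0; apply: nonincreasing_cvg_mu => //.
  - by rewrite [X in (X < _)%E]PDevE ltry.
  - exact: bigcapT_measurable.
  - move=> a b le_ab; apply/subsetPset => w [s /= le_b_s dev_s].
    by exists s => //=; exact: leq_trans le_ab le_b_s.
move/fine_cvgP => [_ /cvgrPdist_le /(_ eps eps0) [N _ small]].
exists N; rewrite -/(Dev N) PDevE lee_fin.
by have := small N (leqnn N); rewrite /= sub0r normrN; exact: le_trans (ler_norm _).
Qed.

Lemma count_increment_gt (R : realFieldType) (f t t0 L M K c c0 : R) :
  0 < f -> 0 < t0 -> 0 <= L -> 1 <= M -> t = t0 + L -> t < (L + 1) * M ->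
  `|c / t - f| <= f / (4 * M) -> `|c0 / t0 - f| <= f / (4 * M) ->
  (K + f) * (2 * M) < t * f -> K < c - c0.
Proof.
move=> f0 t00 L0 M1 tE tLM /ler_normlP[c_lo c_hi] /ler_normlP[c0_lo c0_hi] tK.
set dl := f / (4 * M) in c_lo c_hi c0_lo c0_hi.
have dlE : dl * (4 * M) = f by rewrite /dl divfK // gt_eqF //; lra.
have dl0 : 0 <= dl by nra.
have t0' : 0 < t by lra.
have c_ge : t * (f - dl) <= c.
  have <- : c / t * t = c by rewrite divfK // gt_eqF.
  by rewrite [X in X <= _]mulrC ler_wpM2r //; lra.
have c0_le : c0 <= t0 * (f + dl).
  have <- : c0 / t0 * t0 = c0 by rewrite divfK // gt_eqF.
  by rewrite [X in _ <= X]mulrC ler_wpM2r //; lra.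
(* c - c0 >= L f - 2 t dl = L f - t f / (2 M), and L f > t f / M - f *)
have Lf : t * f < (L + 1) * M * f by rewrite ltr_pM2r.
have : c - c0 >= L * f - 2 * t * dl by rewrite tE in c_ge *; nra.
apply: lt_le_trans; rewrite -(ltr_pM2l (_ : 0 < 2 * M)); last lra.
have -> : 2 * M * (L * f - 2 * t * dl) = 2 * (M * L * f) - t * f.
  by rewrite -dlE; ring.
lra.
Qed.

Lemma exists_expr_le (R : archiRealFieldType) (q eps : R) :
  0 <= q < 1 -> 0 < eps -> exists K, q ^+ K <= eps.
Proof.
move=> /andP[q0 q1] eps0; have normq : `|q| < 1 by rewrite ger0_norm.
have /cvgrPdist_le /(_ eps eps0) [K _ small] := cvg_expr normq.
exists K; have := small K (leqnn K).
by rewrite /= sub0r normrN ger0_norm // exprn_ge0.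
Qed.

Lemma probability_setIC d (T : measurableType d) (R : realType)
    (P : probability T R) (A B : set T) (c : R) :
  measurable A -> measurable B -> P (A `&` B) = (c%:E * P A)%E ->
  P (A `&` ~` B) = ((1 - c)%:E * P A)%E.
Proof.
move=> mA mB PAB; have PA := fineK (fin_num_measure P A mA).
rewrite -setDE measureD //; last by rewrite -PA ltry.
rewrite -[X in (_ - X)%E]/(P (A `&` B)) PAB -[X in (X - _)%E]/(P A) -PA.
by rewrite -EFinM -EFinB -EFinM mulrBl mul1r.
Qed.

Section age_process.
Context d (Omega : measurableType d) (R : realType) (P : probability Omega R)
  (E : finType) (m : nat -> Omega -> {set E}) (S : E -> nat -> Omega -> bool)
  (gamma : E -> R) (a0 : E -> nat).
Hypothesis m_meas : forall t (B : {set E}), measurable [set w | m t w = B].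
Hypothesis S_meas : forall e t, measurable [set w | S e t w].
Hypothesis S_indep : forall e t h,
  P ([set w | S e t w] `&` [set w | hist a0 m S t w = h]) =
  ((gamma e)%:E * P [set w | hist a0 m S t w = h])%E.

Local Notation age := (age a0 m S).
Local Notation hist := (hist a0 m S).

Lemma fibre_measurable_age e t : fibre_measurable (age e t).
Proof.
elim: t => [|t IHt] /=; first exact: fibre_measurable_cst.
exact: (fibre_measurable_comp
  (fun p : {set E} * bool * nat => if (e \in p.1.1) && p.1.2 then 1%N else p.2.+1)
  (fibre_measurable_pair (fibre_measurable_pair (m_meas t)
     (fibre_measurable_bool (S_meas e t))) IHt)).
Qed.

Lemma fibre_measurable_hist t : fibre_measurable (hist t).
Proof.
apply: fibre_measurable_map => tau.
apply: fibre_measurable_pair; first exact: m_meas.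
by apply: fibre_measurable_ffun => e; exact: fibre_measurable_age.
Qed.

Lemma hist_eq_at t w w' tau : hist t w = hist t w' -> (tau <= t)%N ->
  m tau w = m tau w' /\ forall e, age e tau w = age e tau w'.
Proof.
move=> hww' le_tau_t.
have := congr1 (fun l => nth (m 0%N w, [ffun=> 0%N]) l tau) hww'.
rewrite !(nth_map 0%N) ?size_iota ?ltnS // nth_iota ?ltnS // add0n.
case=> -> hage; split=> // e.
by have := congr1 (fun h : {ffun E -> nat} => h e) hage; rewrite !ffunE.
Qed.

Lemma indep_channel_on e t A : saturated (hist t) A ->
  P (A `&` [set w | S e t w]) = ((gamma e)%:E * P A)%E.
Proof.
apply: (measure_saturated_setI (fibre_measurable_hist t) (mu := P) (S_meas e t)).
by move=> h; rewrite setIC; exact: S_indep.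
Qed.

Lemma indep_channel_off e t A : saturated (hist t) A ->
  P (A `&` ~` [set w | S e t w]) = ((1 - gamma e)%:E * P A)%E.
Proof.
move=> satA; apply: probability_setIC (S_meas e t) (indep_channel_on e satA).
exact: (saturated_measurable (fibre_measurable_hist t) satA).
Qed.

Lemma gamma_le1 e : gamma e <= 1.
Proof.
rewrite -lee_fin; have := @indep_channel_on e 0 setT (fun _ _ _ _ => I).
by rewrite setTI probability_setT mule1 => <-; exact: probability_le1.
Qed.

Section link.
Variable e : E.

Local Notation avg t := (avg_reset_age R a0 m S e t).

Definition success i w := (e \in m i w) && S e i w.

Definition nact t0 t w := (\sum_(t0 <= i < t) (e \in m i w : nat))%N.

Lemma reset_age_sum t w :
  (\sum_(tau < t) success tau w * age e tau w + age e t w = t + a0 e)%N.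
Proof.
elim: t => [|t IHt]; first by rewrite big_ord0.
rewrite big_ord_recr /=; move: IHt; rewrite /success.
by case: ((e \in m t w) && S e t w) => /= IHt; lia.
Qed.

Lemma avg_reset_ageE t w : avg t w =
  (t%:R)^-1 * ((t + a0 e)%:R - (age e t w)%:R).
Proof.
rewrite /avg_reset_age -(reset_age_sum t w) natrD addrK natr_sum.
by congr (_ * _); apply: eq_bigr => i _; rewrite natrM.
Qed.

Lemma age_le t w : (age e t w <= t + a0 e)%N.
Proof. by rewrite -(reset_age_sum t w) leq_addl. Qed.

Lemma act_freqE t w : act_freq R m e t w = (t%:R)^-1 * (nact 0 t w)%:R.
Proof. by rewrite /act_freq /nact big_mkord natr_sum. Qed.

(* The history records ages, not channel states: a success at [i] shows up as
   [age (i + 1) = 1], which is unambiguous only when [age i >= 1], i.e. [i > 0]. *)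
Lemma successE i w : (0 < i)%N ->
  success i w = (e \in m i w) && (age e i.+1 w == 1%N).
Proof.
case: i => // i _; rewrite /success /=.
by case: (e \in m i.+1 w) (S e i.+1 w) => [] [] //=; case: ifP.
Qed.

Lemma age_after_success i k w : success i w -> (age e (i.+1 + k) w <= k.+1)%N.
Proof.
rewrite /success => succ_i; elim: k => [|k IHk]; first by rewrite addn0 /= succ_i.
by rewrite addnS /=; case: ifP => // _; rewrite ltnS.
Qed.

Lemma no_success_of_age t0 t w : (t - t0 < age e t w)%N ->
  forall i, (t0 <= i < t)%N -> ~~ success i w.
Proof.
move=> old i /andP[le_t0_i lt_i_t]; apply/negP => /age_after_success.
by move=> /(_ (t - i.+1)%N); rewrite subnKC //; lia.
Qed.

Lemma nact_recr t0 t w : (t0 <= t)%N ->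
  nact t0 t.+1 w = (nact t0 t w + (e \in m t w))%N.
Proof. by move=> le_t0_t; rewrite /nact big_nat_recr. Qed.

Lemma nact_cat t0 t1 t w : (t0 <= t1 <= t)%N ->
  nact t0 t w = (nact t0 t1 w + nact t1 t w)%N.
Proof. by move=> /andP[? ?]; rewrite /nact (@big_cat_nat _ _ _ t1). Qed.

Lemma nact_hit t0 t w j : (t0 <= t)%N -> (j < nact t0 t w)%N ->
  exists tau, [/\ (t0 <= tau < t)%N, nact t0 tau w = j & e \in m tau w].
Proof.
move=> /subnKC <-; elim: (t - t0)%N => [|k IHk].
  by rewrite addn0 /nact big_geq.
rewrite addnS nact_recr ?leq_addr //.
case: (ltnP j (nact t0 (t0 + k) w)) => [/IHk [tau [/andP[? ?] ? ?]] _|le_n_j].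
  by exists tau; split=> //; apply/andP; split; lia.
case act: (e \in m (t0 + k) w) => /= lt_j; last lia.
by exists (t0 + k)%N; split=> //; [apply/andP; split; lia | lia].
Qed.

(* All transmissions since [t0] failed, and [tau] is the [j]-th activation
   since [t0] (counting from 0). *)
Definition fail_run t0 j tau := [set w | [/\ (t0 <= tau)%N,
  forall i, (t0 <= i < tau)%N -> ~~ success i w, nact t0 tau w = j & e \in m tau w]].

Lemma fail_run_trivIset t0 j : trivIset setT (fail_run t0 j).
Proof.
apply: ltn_trivIset => n k lt_k_n; apply/seteqP; split=> // w.
move=> [[le_t0_k _ nact_k act_k] [_ _ nact_n _]].
have := nact_recr w le_t0_k; rewrite act_k nact_k.
by rewrite (@nact_cat t0 k.+1 n) ?le_t0_k // in nact_n; lia.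
Qed.

Lemma fail_run_saturated t0 j tau : (0 < t0)%N ->
  saturated (hist tau) (fail_run t0 j tau).
Proof.
move=> t0_gt0 w w' hww' [le_t0_tau fail nact_tau act_tau].
have sched i : (i <= tau)%N -> m i w = m i w' by move=> /(hist_eq_at hww') [].
split=> //.
- move=> i /andP[le_t0_i lt_i_tau]; rewrite successE; last lia.
  rewrite -sched ?(ltnW lt_i_tau) // -((hist_eq_at hww' lt_i_tau).2 e).
  by rewrite -successE; [apply: fail; apply/andP | lia].
- rewrite -nact_tau; apply: eq_big_nat => i /andP[_ lt_i_tau].
  by rewrite sched // ltnW.
- by rewrite -sched.
Qed.

Lemma fail_run_measurable t0 j tau : (0 < t0)%N -> measurable (fail_run t0 j tau).
Proof.
by move=> t0_gt0; apply: (saturated_measurable (fibre_measurable_hist tau));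
   exact: fail_run_saturated.
Qed.

Lemma fail_run_of_nact t0 t j w : (t0 <= t)%N ->
  (forall i, (t0 <= i < t)%N -> ~~ success i w) -> (j < nact t0 t w)%N ->
  (\big[setU/set0]_(tau < t) fail_run t0 j tau) w.
Proof.
move=> le_t0_t fail /(nact_hit le_t0_t) [tau [/andP[le_t0_tau lt_tau_t] ? ?]].
rewrite -bigcup_mkord; exists tau => //; split=> // i /andP[? ?].
by apply: fail; apply/andP; split; lia.
Qed.

Lemma fail_run_succ_sub t0 j s :
  \big[setU/set0]_(tau < s) fail_run t0 j.+1 tau `<=`
  \big[setU/set0]_(tau < s) (fail_run t0 j tau `&` ~` [set w | S e tau w]).
Proof.
rewrite -bigcup_mkord
  -(bigcup_mkord s (fun tau => fail_run t0 j tau `&` ~` [set w | S e tau w])).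
move=> w [tau' /= lt_tau'_s [le_t0_tau' fail nact_tau' _]].
have /(nact_hit le_t0_tau') [tau [/andP[le_t0_tau lt_tau_tau'] nact_tau act_tau]] :
  (j < nact t0 tau' w)%N by rewrite nact_tau'.
exists tau => /=; first lia.
split; first by split=> // i /andP[? ?]; apply: fail; apply/andP; split; lia.
move=> S_tau; have := fail tau; rewrite le_t0_tau lt_tau_tau' /success act_tau.
by rewrite S_tau => /(_ isT).
Qed.

(* [j + 1] failed activations extend [j] of them by a failure at the [j]-th
   activation time, whose channel state is independent of the history so far. *)
Lemma prob_fail_run_le t0 j s : (0 < t0)%N ->
  (P (\big[setU/set0]_(tau < s) fail_run t0 j tau) <= ((1 - gamma e) ^+ j)%:E)%E.
Proof.
move=> t0_gt0; elim: j => [|j IHj].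
  rewrite expr0; apply: probability_le1; apply: bigsetU_measurable => tau _.
  exact: fail_run_measurable.
have mrun tau : measurable (fail_run t0 j tau) := fail_run_measurable j tau t0_gt0.
have mfail tau : measurable (fail_run t0 j tau `&` ~` [set w | S e tau w]).
  exact/measurableI/measurableC/S_meas.
apply: (@le_trans _ _ (P (\big[setU/set0]_(tau < s)
    (fail_run t0 j tau `&` ~` [set w | S e tau w])))).
  apply: le_measure (@fail_run_succ_sub t0 j s); rewrite inE.
  - by apply: bigsetU_measurable => tau _; exact: fail_run_measurable.
  - by apply: bigsetU_measurable => tau _; exact: mfail.
rewrite (measure_bigsetU P mfail (trivIset_setIr (@fail_run_trivIset t0 j))).
rewrite (eq_bigr (fun tau : 'I_s => ((1 - gamma e)%:E * P (fail_run t0 j tau))%E)).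
  rewrite -ge0_sume_distrr; last by move=> tau _; exact: measure_ge0.
  rewrite -(measure_bigsetU P mrun (@fail_run_trivIset t0 j)) exprS EFinM.
  by rewrite lee_wpmul2l // lee_fin subr_ge0 gamma_le1.
by move=> tau _; apply: indep_channel_off; exact: fail_run_saturated.
Qed.

Lemma act_freq_hist s w w' : hist s w = hist s w' ->
  act_freq R m e s w = act_freq R m e s w'.
Proof.
move=> hww'; rewrite !act_freqE; congr (_ * _%:R); apply: eq_big_nat => i.
by move=> /andP[_ /ltnW /(hist_eq_at hww') []] ->.
Qed.

Lemma old_age_fail_run (f : R) t L M K w : 0 < f -> (0 < M)%N ->
  (0 < t - L)%N -> (t < L.+1 * M)%N -> (K%:R + f) * (2 * M%:R) < t%:R * f ->
  `|act_freq R m e t w - f| <= f / (4 * M%:R) ->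
  `|act_freq R m e (t - L) w - f| <= f / (4 * M%:R) ->
  (L < age e t w)%N -> (\big[setU/set0]_(tau < t) fail_run (t - L) K tau) w.
Proof.
move=> f0 M0 t0_gt0 tLM tK close_t close_t0 old.
have le_L_t : (L <= t)%N by lia.
apply: fail_run_of_nact; first exact: leq_subr.
  by apply: no_success_of_age; rewrite subKn.
have nactE : nact 0 t w = (nact 0 (t - L) w + nact (t - L) t w)%N.
  by apply: nact_cat; rewrite leq_subr.
have -> : nact (t - L) t w = (nact 0 t w - nact 0 (t - L) w)%N.
  by rewrite nactE addKn.
have le_c0_c : (nact 0 (t - L) w <= nact 0 t w)%N by rewrite nactE leq_addr.
rewrite -(ltr_nat R) natrB //.
apply: (@count_increment_gt _ f t%:R (t - L)%:R L%:R M%:R) => //.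
- by rewrite ltr0n.
- by rewrite ler1n.
- by rewrite -natrD subnK.
- by rewrite natr1 -natrM ltr_nat.
- by move: close_t; rewrite act_freqE mulrC.
- by move: close_t0; rewrite act_freqE mulrC.
Qed.

Lemma avg_reset_age_ge0 t w : 0 <= avg t w.
Proof.
by rewrite avg_reset_ageE mulr_ge0 // ?invr_ge0 // subr_ge0 ler_nat age_le.
Qed.

Lemma avg_reset_age_le t w : (0 < t)%N -> avg t w <= 1 + (a0 e)%:R / t%:R.
Proof.
move=> t_gt0; rewrite avg_reset_ageE natrD mulrBr mulrDr mulVf ?pnatr_eq0 -?lt0n //.
by rewrite [_ / _]mulrC lerBlDr lerDl mulr_ge0 // invr_ge0.
Qed.

Lemma avg_reset_age_ge t M w : (0 < t)%N -> (0 < M)%N ->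
  (age e t w <= t %/ M)%N -> 1 - (M%:R)^-1 <= avg t w.
Proof.
move=> t_gt0 M_gt0 young; have t0 : 0 < t%:R :> R by rewrite ltr0n.
have M0 : 0 < M%:R :> R by rewrite ltr0n.
have LM : (t %/ M)%:R / t%:R <= (M%:R)^-1 :> R.
  by rewrite ler_pdivrMr // mulrC ler_pdivlMr // -natrM ler_nat leq_divM.
have tLE : (t%:R)^-1 * (t%:R - (t %/ M)%:R) = 1 - (t %/ M)%:R / t%:R :> R.
  by rewrite mulrBr mulVf ?gt_eqF // mulrC.
suff : (t%:R)^-1 * (t%:R - (t %/ M)%:R) <= avg t w by lra.
rewrite avg_reset_ageE; apply: ler_wpM2l; first by rewrite invr_ge0 ltW.
rewrite natrD.
have : (age e t w)%:R <= (t %/ M)%:R :> R by rewrite ler_nat.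
have : 0 <= (a0 e)%:R :> R by [].
lra.
Qed.

Lemma measurable_avg_reset_age t : measurable_fun setT (fun w => (avg t w)%:E).
Proof.
apply: (saturated_measurable_fun (fibre_measurable_age e t)) => w w' agew.
by rewrite !avg_reset_ageE agew.
Qed.

Lemma expectation_avg_reset_ageE t : ('E_P[avg t] = \int[P]_w (avg t w)%:E)%E.
Proof. by rewrite unlock. Qed.

Lemma expectation_avg_reset_age_le t : (0 < t)%N ->
  ('E_P[avg t] <= (1 + (a0 e)%:R / t%:R)%:E)%E.
Proof.
move=> t_gt0; rewrite expectation_avg_reset_ageE.
apply: (@le_trans _ _ (\int[P]_w (cst (1 + (a0 e)%:R / t%:R)%:E w))%E).
  apply: ge0_le_integral => //.
  - by move=> w _; rewrite lee_fin avg_reset_age_ge0.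
  - exact: measurable_avg_reset_age.
  - by move=> w _; rewrite lee_fin; exact: avg_reset_age_le.
by rewrite integral_cst // -[X in (_ * X)%E]/(P setT) probability_setT mule1.
Qed.

Lemma expectation_avg_reset_age_ge_young t M : (0 < t)%N -> (0 < M)%N ->
  ((1 - (M%:R)^-1)%:E * P [set w | (age e t w <= t %/ M)%N] <= 'E_P[avg t])%E.
Proof.
move=> t_gt0 M_gt0; set G := [set w | _].
have mG : measurable G :=
  fibre_measurable_preimage (fibre_measurable_age e t) [set n | (n <= t %/ M)%N].
have M1 : 0 <= 1 - (M%:R)^-1 :> R by rewrite subr_ge0 invf_le1 ?ler1n ?ltr0n.
rewrite expectation_avg_reset_ageE -[X in (_ * X)%E]/(P G) -(setIT G) -integral_indic //.
rewrite -ge0_integralZl_EFin //; last exact/measurable_EFinP/measurable_indic.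
apply: ge0_le_integral => //.
- by move=> w _; rewrite mule_ge0 // lee_fin.
- exact/measurable_funeM/measurable_EFinP/measurable_indic.
- exact: measurable_avg_reset_age.
move=> w _; rewrite -EFinM lee_fin /indic.
have [young|old] := boolP (age e t w <= t %/ M)%N.
  by rewrite mem_set // mulr1; exact: avg_reset_age_ge.
by rewrite memNset ?mulr0 ?avg_reset_age_ge0 //; exact/negP.
Qed.

Section frequency.
Variable f : R.
Hypothesis f_gt0 : 0 < f.
Hypothesis act_freq_cvg :
  {ae P, forall w, (fun t => act_freq R m e t w : R^o) @ \oo --> f}.
Hypothesis gamma_gt0 : 0 < gamma e.

Lemma old_age_prob_le (eta : R) M : 0 < eta -> (2 <= M)%N ->
  exists N, forall t, (N <= t)%N ->
    (P [set w | (t %/ M < age e t w)%N] <= eta%:E)%E.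
Proof.
move=> eta0 M2; have M0 : 0 < M%:R :> R by rewrite ltr0n; lia.
have eta2 : 0 < eta / 2 by rewrite divr_gt0.
have [K qK] : exists K, (1 - gamma e) ^+ K <= eta / 2.
  by apply: exists_expr_le eta2; rewrite subr_ge0 gamma_le1 ltrBlDr ltrDl.
pose dl := f / (4 * M%:R).
have dl0 : 0 < dl by rewrite divr_gt0 // mulr_gt0.
have mdev s : measurable [set w | dl < `|act_freq R m e s w - f|].
  apply: (saturated_measurable (fibre_measurable_hist s)) => w w' hww' /=.
  by rewrite (act_freq_hist hww').
have [T0 PDev] := ae_cvg_deviation_small dl0 eta2 mdev act_freq_cvg.
set Dev := \bigcup_(s in _) _ in PDev.
have mDev : measurable Dev by apply: bigcup_measurable => s _; exact: mdev.
pose c := (K%:R + f) * (2 * M%:R) / f.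
exists (maxn (2 * T0).+2 (Num.truncn c).+1) => t; rewrite geq_max => /andP[tT0 tc].
have tK : (K%:R + f) * (2 * M%:R) < t%:R * f.
  by rewrite -ltr_pdivrMr //; apply: (lt_le_trans (truncnS_gt c)); rewrite ler_nat.
have LM := leq_divM t M; have tLM : (t < (t %/ M).+1 * M)%N by apply: ltn_ceil; lia.
have T0_le : (T0 <= t - t %/ M)%N by nia.
have t0_gt0 : (0 < t - t %/ M)%N by nia.
have old_sub : [set w | (t %/ M < age e t w)%N] `<=`
    Dev `|` \big[setU/set0]_(tau < t) fail_run (t - t %/ M) K tau.
  move=> w old; have [dev|close] := pselect (Dev w); [by left | right].
  have close_at s : (T0 <= s)%N -> `|act_freq R m e s w - f| <= dl.
    by move=> le_T0_s; rewrite leNgt; apply/negP => dev_s; apply: close; exists s.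
  by apply: (old_age_fail_run (M := M) (K := K) f_gt0) old => //; try lia;
     apply: close_at; lia.
have mfail : measurable (\big[setU/set0]_(tau < t) fail_run (t - t %/ M) K tau).
  by apply: bigsetU_measurable => tau _; apply: fail_run_measurable; lia.
apply: (le_trans (le_measure _ _ _ old_sub)); rewrite ?inE.
- exact: (fibre_measurable_preimage (fibre_measurable_age e t) [set n | (t %/ M < n)%N]).
- exact: measurableU.
apply: (le_trans (measureU2 P mDev mfail)).
have := @prob_fail_run_le (t - t %/ M) K t; rewrite subn_gt0 => /(_ _) fail_le.
rewrite (splitr eta) EFinD leeD // (le_trans (fail_le _)) ?lee_fin //; lia.
Qed.

Lemma expectation_avg_reset_age_ge (eta : R) : 0 < eta ->
  exists N, forall t, (N <= t)%N -> ((1 - eta)%:E <= 'E_P[avg t])%E.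
Proof.
move=> eta0; pose M := (Num.truncn (2 / eta)).+2.
have M0 : 0 < M%:R :> R by rewrite ltr0n.
have invM : (M%:R)^-1 <= eta / 2 :> R.
  have : 2 / eta < M%:R by apply: (lt_le_trans (truncnS_gt _)); rewrite ler_nat.
  rewrite ltr_pdivrMr // => Meta.
  rewrite -(ler_pM2r M0) mulVf ?gt_eqF // mulrAC ler_pdivlMr // mul1r mulrC.
  exact: ltW.
have eta2 : 0 < eta / 2 by rewrite divr_gt0.
have [N old] := @old_age_prob_le (eta / 2) M eta2 isT.
exists N.+1 => t lt_N_t; have t_gt0 : (0 < t)%N by lia.
pose G := [set w | (age e t w <= t %/ M)%N].
have mG : measurable G :=
  fibre_measurable_preimage (fibre_measurable_age e t) [set n | (n <= t %/ M)%N].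
have PG : ((1 - eta / 2)%:E <= P G)%E.
  have PGE : P G = (fine (P G))%:E by rewrite fineK // fin_num_measure.
  have := old t (ltnW lt_N_t); rewrite (_ : [set _ | _] = ~` G); last first.
    by apply/seteqP; split=> w /=; rewrite ltnNge => /negP.
  by rewrite probability_setC // PGE -EFinB !lee_fin; lra.
apply: le_trans (expectation_avg_reset_age_ge_young t_gt0 (isT : (0 < M)%N)).
apply: le_trans (lee_wpmul2l _ PG); last by rewrite lee_fin subr_ge0 invf_le1 // ler1n.
rewrite -EFinM lee_fin.
have : 0 <= (M%:R)^-1 * (eta / 2) :> R by rewrite mulr_ge0 ?invr_ge0 ?ltW.
lra.
Qed.

Lemma expectation_avg_reset_age_cvg : ('E_P[avg t] @[t --> \oo] --> 1%:E)%E.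
Proof.
have Efin t : (0 < t)%N -> ('E_P[avg t])%E \is a fin_num.
  move=> t_gt0; rewrite ge0_fin_numE.
    exact: le_lt_trans (expectation_avg_reset_age_le t_gt0) (ltry _).
  rewrite expectation_avg_reset_ageE integral_ge0 // => w _.
  by rewrite lee_fin avg_reset_age_ge0.
apply/fine_cvgP; split; first by exists 1%N => // t /= t_gt0; exact: Efin.
apply/cvgrPdist_le => eta eta0.
have [N1 lower] := expectation_avg_reset_age_ge eta0.
pose N2 := (Num.truncn ((a0 e)%:R / eta)).+1.
exists (maxn (maxn N1 N2) 1) => // t /=.
rewrite !geq_max => /andP[/andP[le_N1_t le_N2_t] t_gt0].
have lo := lower t le_N1_t; have hi := expectation_avg_reset_age_le t_gt0.
rewrite -(fineK (Efin t t_gt0)) !lee_fin in lo hi.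
have tR : 0 < t%:R :> R by rewrite ltr0n.
have a0_small : (a0 e)%:R / t%:R <= eta :> R.
  rewrite ler_pdivrMr // -ler_pdivrMl // mulrC; apply/ltW/(lt_le_trans (truncnS_gt _)).
  by rewrite ler_nat.
by rewrite ler_norml; apply/andP; split; lra.
Qed.

End frequency.
End link.
End age_process.

Theorem lemma1 (d : measure_display) (Omega : measurableType d)
  (R : realType) (P : probability Omega R)
  (E : finType) (feas : {set {set E}})
  (m : nat -> Omega -> {set E}) (S : E -> nat -> Omega -> bool)
  (gamma : E -> R) (a0 : E -> nat) (f : E -> R)
  (* feasible activation sets *)
  (hfeas : forall t w, m t w \in feas)
  (* measurability of the schedule and the channel states *)
  (hm_meas : forall t (B : {set E}), measurable [set w | m t w = B])
  (hS_meas : forall e t, measurable [set w | S e t w])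
  (* channel: for each link, (S_e(t))_t i.i.d. Bernoulli(gamma_e), gamma_e > 0 *)
  (hgamma : forall e, 0 < gamma e)
  (hiid : forall e (n : nat) (b : nat -> bool),
     P [set w | forall tau, (tau < n)%N -> S e tau w = b tau] =
     (\prod_(tau < n) (if b tau then gamma e else 1 - gamma e))%:E)
  (* the scheduler does not know the current channel state:
     S_e(t) is independent of (H(t), m_t) *)
  (hindep : forall e t h,
     P ([set w | S e t w] `&` [set w | hist a0 m S t w = h]) =
     ((gamma e)%:E * P [set w | hist a0 m S t w = h])%E)
  (* pi in Pi: link activation frequencies exist and are positive *)
  (hfreq : forall e, 0 < f e /\
     {ae P, forall w, (fun t : nat => act_freq R m e t w : R^o) @ \oo --> f e}) :
  forall e : E,
    (fun t : nat => 'E_P[avg_reset_age R a0 m S e t]%E) @ \oo --> (1%:E)%E.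
Proof.
move=> e; have [f_gt0 act_freq_cvg] := hfreq e.
exact: (expectation_avg_reset_age_cvg hm_meas hS_meas hindep f_gt0 act_freq_cvg (hgamma e)).
Qed.
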